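(* Let $T$ be a measure-preserving transformation of a finite measure space $(X,\mu)$ and let $\{K_n\}_{n\ge1}$ be measurable subsets of $X$ with $\sum_{n=1}^\infty\mu(X\setminus K_n)<\infty$. Then there is a full measure subset $\Omega\subseteq X$ such that for any $x,y\in\Omega$ there exist $n\in\mathbb N$ and a sequence $n_k\to\infty$ with $T^{n_k}(x)\in K_n$ and $T^{n_k}(y)\in K_n$ for every $k$. *)

From Stdlib Require Import Reals.
Open Scope R_scope.

Definition compl {X : Type} (A : X -> Prop) : X -> Prop := fun x => ~ A x.
Definition preimage {X : Type} (T : X -> X) (A : X -> Prop) : X -> Prop :=
  fun x => A (T x).
Definition bigcup {X : Type} (A : nat -> X -> Prop) : X -> Prop :=
  fun x => exists n, A n x.

Record FiniteMeasureSpace (X : Type) := {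
  measurable : (X -> Prop) -> Prop;
  mu : (X -> Prop) -> R;
  measurable_full : measurable (fun _ => True);
  measurable_compl : forall A, measurable A -> measurable (compl A);
  measurable_bigcup : forall A : nat -> X -> Prop,
      (forall n, measurable (A n)) -> measurable (bigcup A);
  mu_ge0 : forall A, measurable A -> 0 <= mu A;
  mu_empty : mu (fun _ => False) = 0;
  mu_sigma_additive : forall A : nat -> X -> Prop,
      (forall n, measurable (A n)) ->
      (forall n m x, n <> m -> A n x -> A m x -> False) ->
      infinite_sum (fun n => mu (A n)) (mu (bigcup A))
}.
Arguments measurable {X} _ _.
Arguments mu {X} _ _.

Definition measure_preserving {X : Type} (M : FiniteMeasureSpace X)
  (T : X -> X) : Prop :=
  forall A, measurable M A ->
    measurable M (preimage T A) /\ mu M (preimage T A) = mu M A.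

Definition full_measure {X : Type} (M : FiniteMeasureSpace X)
  (Om : X -> Prop) : Prop :=
  measurable M Om /\ mu M (compl Om) = 0.

From Stdlib Require Import Reals Lra Lia List Classical ClassicalEpsilon
  FunctionalExtensionality PropExtensionality.
Open Scope R_scope.

(* Everything rests on a maximal inequality. Call an orbit segment of length N
   heavy for A if at least N/3 of its points lie in A. Covering the time axis
   greedily by heavy segments and using the invariance of mu shows that the set
   of points starting some heavy segment for A has measure at most 3 mu(A).
   Summing over m > n, the points starting a heavy segment for X \ K_m for
   some m > n form a set of measure at most 3 sum_(m>n) mu(X \ K_m), which
   tends to 0; so almost every x has an n such that, for all m > n, every
   initial orbit segment of x spends less than a third of its time outside
   K_m. For two such points and a common large m, among the times in [k, 3k+3)
   fewer than 2k+2 see x or y outside K_m, so both are in K_m at some time of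
   this window. *)

Lemma set_ext {X : Type} (A B : X -> Prop) : (forall x, A x <-> B x) -> A = B.
Proof.
  intros H; apply functional_extensionality; intros x.
  apply propositional_extensionality, H.
Qed.

Fixpoint sumR (g : nat -> R) (n : nat) : R :=
  match n with 0%nat => 0 | S n => sumR g n + g n end.

Lemma sum_f_R0_sumR g n : sum_f_R0 g n = sumR g (S n).
Proof. induction n as [|n IH]; simpl in *; [ring|]. rewrite IH; simpl; ring. Qed.

Lemma sumR_ext g h n : (forall i, g i = h i) -> sumR g n = sumR h n.
Proof. intros H; induction n as [|n IH]; simpl; auto. rewrite IH, H; auto. Qed.

Lemma sumR_le g h n : (forall i, (i < n)%nat -> g i <= h i) -> sumR g n <= sumR h n.
Proof.
  induction n as [|n IH]; simpl; intros H; [lra|].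
  assert (g n <= h n) by (apply H; lia).
  assert (sumR g n <= sumR h n) by (apply IH; intros; apply H; lia). lra.
Qed.

Lemma sumR_ge0 g n : (forall i, 0 <= g i) -> 0 <= sumR g n.
Proof. induction n as [|n IH]; simpl; intros H; [lra|]. specialize (IH H). specialize (H n). lra. Qed.

Lemma sumR_add_len g n m : sumR g (n + m) = sumR g n + sumR (fun j => g (n + j)%nat) m.
Proof.
  induction m as [|m IH]; simpl; [rewrite Nat.add_0_r; ring|].
  rewrite Nat.add_succ_r; simpl; rewrite IH; ring.
Qed.

Lemma sumR_plus g h n : sumR (fun i => g i + h i) n = sumR g n + sumR h n.
Proof. induction n as [|n IH]; simpl; [ring|]. rewrite IH; ring. Qed.

Lemma sumR_scal c g n : sumR (fun i => c * g i) n = c * sumR g n.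
Proof. induction n as [|n IH]; simpl; [ring|]. rewrite IH; ring. Qed.

Lemma sumR_const0 n : sumR (fun _ => 0) n = 0.
Proof. induction n as [|n IH]; simpl; [|rewrite IH]; ring. Qed.

Lemma infinite_sum_le g l c :
  infinite_sum g l -> (forall n, sumR g n <= c) -> l <= c.
Proof.
  intros Hl Hc. destruct (Rle_dec l c) as [h|h]; auto. exfalso.
  destruct (Hl (l - c)) as [N HN]; [lra|].
  specialize (HN N (le_n _)). specialize (Hc (S N)). unfold R_dist in HN.
  rewrite sum_f_R0_sumR in HN. apply Rabs_def2 in HN. lra.
Qed.

Lemma sumR_le_infinite_sum g l n :
  infinite_sum g l -> (forall i, 0 <= g i) -> sumR g n <= l.
Proof.
  intros Hl Hg. destruct (Rle_dec (sumR g n) l) as [h|h]; auto. exfalso.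
  destruct (Hl (sumR g n - l)) as [N HN]; [lra|].
  specialize (HN (N + n)%nat ltac:(lia)). unfold R_dist in HN.
  apply Rabs_def2 in HN. rewrite sum_f_R0_sumR in HN.
  replace (S (N + n)) with (n + S N)%nat in HN by lia. rewrite sumR_add_len in HN.
  assert (0 <= sumR (fun j => g (n + j)%nat) (S N)) by (apply sumR_ge0; auto). lra.
Qed.

Lemma sumR_tail_le g l n m :
  infinite_sum g l -> (forall i, 0 <= g i) ->
  sumR (fun j => g (n + j)%nat) m <= l - sumR g n.
Proof.
  intros Hl Hg. pose proof (sumR_le_infinite_sum g l (n + m) Hl Hg).
  rewrite sumR_add_len in H. lra.
Qed.

Lemma le0_of_le_tails g l a :
  infinite_sum g l -> (forall n, a <= l - sumR g n) -> a <= 0.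
Proof.
  intros Hl Ha. destruct (Rle_dec a 0) as [h|h]; auto. exfalso.
  destruct (Hl a) as [N HN]; [lra|].
  specialize (HN N (le_n _)). specialize (Ha (S N)). unfold R_dist in HN.
  rewrite sum_f_R0_sumR in HN. apply Rabs_def2 in HN. lra.
Qed.

Lemma le_of_forall_INR_mul_le a b L :
  (forall H : nat, INR H * a <= INR (H + L) * b) -> a <= b.
Proof.
  intros Hab. destruct (Rle_dec a b) as [h|h]; auto. exfalso.
  destruct (INR_unbounded (INR L * b / (a - b))) as [H HH].
  specialize (Hab H). rewrite plus_INR in Hab.
  assert (INR H * (a - b) > INR L * b).
  { apply Rmult_gt_reg_r with (/ (a - b)); [apply Rinv_0_lt_compat; lra|].
    rewrite Rmult_assoc, Rinv_r by lra. unfold Rdiv in HH. lra. }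
  lra.
Qed.
Section FiniteMeasure.
Context {X : Type} (M : FiniteMeasureSpace X).

Lemma measurable_ext (A B : X -> Prop) :
  (forall x, A x <-> B x) -> measurable M A -> measurable M B.
Proof. intros H; rewrite (set_ext _ _ H); auto. Qed.

Lemma mu_ext (A B : X -> Prop) : (forall x, A x <-> B x) -> mu M A = mu M B.
Proof. intros H; rewrite (set_ext _ _ H); auto. Qed.

Lemma measurable_set0 : measurable M (fun _ => False).
Proof.
  apply (measurable_ext (compl (fun _ => True))); [unfold compl; tauto|].
  apply measurable_compl, measurable_full.
Qed.

Lemma mu_set0 (A : X -> Prop) : (forall x, ~ A x) -> mu M A = 0.
Proof. intros H; rewrite <- (mu_empty _ M); apply mu_ext; firstorder. Qed.

Definition two_sets (A B : X -> Prop) (n : nat) : X -> Prop :=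
  match n with 0%nat => A | 1%nat => B | _ => fun _ => False end.

Lemma bigcup_two_sets A B x : bigcup (two_sets A B) x <-> A x \/ B x.
Proof.
  unfold bigcup; split.
  - intros [[|[|n]] H]; simpl in H; auto. destruct H.
  - intros [H|H]; [exists 0%nat|exists 1%nat]; exact H.
Qed.

Lemma measurable_setU A B :
  measurable M A -> measurable M B -> measurable M (fun x => A x \/ B x).
Proof.
  intros HA HB. apply (measurable_ext (bigcup (two_sets A B))).
  - apply bigcup_two_sets.
  - apply measurable_bigcup. intros [|[|n]]; simpl; auto. apply measurable_set0.
Qed.

Lemma measurable_setI A B :
  measurable M A -> measurable M B -> measurable M (fun x => A x /\ B x).
Proof.
  intros HA HB. apply (measurable_ext (compl (fun x => compl A x \/ compl B x))).
  - unfold compl; intros; tauto.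
  - apply measurable_compl, measurable_setU; apply measurable_compl; auto.
Qed.

Lemma measurable_setD A B :
  measurable M A -> measurable M B -> measurable M (fun x => A x /\ ~ B x).
Proof. intros HA HB; apply measurable_setI, measurable_compl; auto. Qed.

Lemma measurable_const_and (Q : Prop) A :
  measurable M A -> measurable M (fun x => Q /\ A x).
Proof.
  intros HA; destruct (classic Q) as [q|q].
  - apply (measurable_ext A); auto; intros; tauto.
  - apply (measurable_ext (fun _ => False)); [tauto|apply measurable_set0].
Qed.

Lemma measurable_bigcap (A : nat -> X -> Prop) :
  (forall n, measurable M (A n)) -> measurable M (fun x => forall n, A n x).
Proof.
  intros HA. apply (measurable_ext (compl (bigcup (fun n => compl (A n))))).
  - unfold compl, bigcup; intros x; split.
    + intros h n. apply NNPP; intros h'; apply h; exists n; auto.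
    + intros h [n hn]; auto.
  - apply measurable_compl, measurable_bigcup; intros; apply measurable_compl; auto.
Qed.

Lemma mu_setU_disjoint A B :
  measurable M A -> measurable M B -> (forall x, A x -> B x -> False) ->
  mu M (fun x => A x \/ B x) = mu M A + mu M B.
Proof.
  intros HA HB Hd.
  rewrite <- (mu_ext _ _ (bigcup_two_sets A B)).
  eapply uniqueness_sum; [apply mu_sigma_additive|].
  - intros [|[|n]]; simpl; auto; apply measurable_set0.
  - intros [|[|n]] [|[|m]] x Hnm H1 H2; simpl in *; try lia; eauto.
  - intros eps Heps. exists 1%nat. intros n Hn.
    replace (sum_f_R0 (fun n => mu M (two_sets A B n)) n) with (mu M A + mu M B).
    { unfold R_dist. rewrite Rminus_diag, Rabs_R0. lra. }
    induction n as [|[|n] IH]; [lia|simpl; ring|].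
    rewrite tech5, <- IH by lia. simpl. rewrite mu_empty. ring.
Qed.

Lemma mu_le A B :
  measurable M A -> measurable M B -> (forall x, A x -> B x) -> mu M A <= mu M B.
Proof.
  intros HA HB Hs.
  rewrite (mu_ext B (fun x => A x \/ (B x /\ ~ A x))).
  - rewrite mu_setU_disjoint; auto using measurable_setD; [|tauto].
    assert (0 <= mu M (fun x => B x /\ ~ A x)) by (apply mu_ge0, measurable_setD; auto).
    lra.
  - intros x; split; [|firstorder]. intros h; destruct (classic (A x)); auto.
Qed.

Lemma mu_setU_le A B :
  measurable M A -> measurable M B -> mu M (fun x => A x \/ B x) <= mu M A + mu M B.
Proof.
  intros HA HB.
  rewrite (mu_ext _ (fun x => A x \/ (B x /\ ~ A x))).
  - rewrite mu_setU_disjoint; auto using measurable_setD; [|tauto].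
    enough (mu M (fun x => B x /\ ~ A x) <= mu M B) by lra.
    apply mu_le; auto using measurable_setD. tauto.
  - intros x; split; [|tauto]. intros [h|h]; auto. destruct (classic (A x)); auto.
Qed.

Definition partial_union (A : nat -> X -> Prop) (N : nat) : X -> Prop :=
  fun x => exists i, (i < N)%nat /\ A i x.

Lemma partial_union_S A N x :
  partial_union A (S N) x <-> partial_union A N x \/ A N x.
Proof.
  unfold partial_union; split.
  - intros [i [hi h]]. destruct (Nat.eq_dec i N); [subst; auto|].
    left; exists i; split; auto; lia.
  - intros [[i [hi h]]|h]; [exists i; split; auto|exists N; split; auto].
Qed.

Lemma measurable_partial_union A N :
  (forall n, measurable M (A n)) -> measurable M (partial_union A N).
Proof.
  intros HA. apply (measurable_ext (bigcup (fun i x => (i < N)%nat /\ A i x))).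
  - unfold bigcup, partial_union; intros; tauto.
  - apply measurable_bigcup; intros; apply measurable_const_and; auto.
Qed.

Lemma mu_partial_union_le A N :
  (forall n, measurable M (A n)) ->
  mu M (partial_union A N) <= sumR (fun i => mu M (A i)) N.
Proof.
  intros HA. induction N as [|N IH]; simpl.
  - rewrite mu_set0; [lra|]. intros x [i [h _]]; lia.
  - rewrite (mu_ext _ _ (partial_union_S A N)).
    eapply Rle_trans; [apply mu_setU_le; auto using measurable_partial_union|]. lra.
Qed.

(* Countable subadditivity in the form of continuity from below: the disjoint
   pieces [A i \ partial_union A i] have partial sums [mu (partial_union A N)]. *)
Lemma mu_bigcup_le A c :
  (forall n, measurable M (A n)) -> (forall N, mu M (partial_union A N) <= c) ->
  mu M (bigcup A) <= c.
Proof.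
  intros HA Hc.
  set (D := fun i x => A i x /\ ~ partial_union A i x).
  assert (HD : forall n, measurable M (D n))
    by (intros n; apply measurable_setD; auto using measurable_partial_union).
  assert (Hu : forall x, bigcup D x <-> bigcup A x).
  { intros x; unfold bigcup; split.
    - intros [i [h _]]; eauto.
    - intros [i h]. revert h.
      induction i as [i IH] using (well_founded_induction Wf_nat.lt_wf). intros h.
      destruct (classic (partial_union A i x)) as [[j [hj hj']]|hn].
      + exact (IH j hj hj').
      + exists i; split; auto. }
  assert (Hp : forall N, sumR (fun i => mu M (D i)) N = mu M (partial_union A N)).
  { induction N as [|N IH]; simpl.
    - symmetry; apply mu_set0. intros x [i [h _]]; lia.
    - rewrite IH, <- mu_setU_disjoint; auto using measurable_partial_union.
      + apply mu_ext; intros x. rewrite partial_union_S. unfold D.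
        destruct (classic (partial_union A N x)); tauto.
      + unfold D; tauto. }
  rewrite <- (mu_ext _ _ Hu). eapply infinite_sum_le.
  - apply mu_sigma_additive; auto.
    intros i j x hij [h1 n1] [h2 n2].
    destruct (Nat.lt_ge_cases i j).
    + apply n2; exists i; split; auto.
    + apply n1; exists j; split; auto; lia.
  - intros n; rewrite Hp; auto.
Qed.

End FiniteMeasure.

Section LayerCake.
Context {X : Type} (M : FiniteMeasureSpace X).

Definition indic (A : X -> Prop) (x : X) : nat :=
  if excluded_middle_informative (A x) then 1%nat else 0%nat.

Lemma indic_spec A x :
  (A x /\ indic A x = 1%nat) \/ (~ A x /\ indic A x = 0%nat).
Proof. unfold indic; destruct (excluded_middle_informative (A x)); auto. Qed.

Lemma indic_le1 A x : (indic A x <= 1)%nat.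
Proof. destruct (indic_spec A x) as [[_ h]|[_ h]]; lia. Qed.

(* [mu_list l] is the integral of [mult l]. *)
Definition mult (l : list (X -> Prop)) (x : X) : nat :=
  fold_right (fun A acc => (indic A x + acc)%nat) 0%nat l.

Definition mu_list (l : list (X -> Prop)) : R :=
  fold_right (fun A acc => mu M A + acc) 0 l.

Lemma mult_le_length l x : (mult l x <= length l)%nat.
Proof. induction l as [|A l IH]; simpl; auto. pose proof (indic_le1 A x). lia. Qed.

Lemma mult_app l1 l2 x : mult (l1 ++ l2) x = (mult l1 x + mult l2 x)%nat.
Proof. induction l1 as [|A l IH]; simpl; auto. rewrite IH. lia. Qed.

Lemma mu_list_app l1 l2 : mu_list (l1 ++ l2) = mu_list l1 + mu_list l2.
Proof. induction l1 as [|A l IH]; simpl; [ring|]. rewrite IH. ring. Qed.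

Lemma measurable_mult l (P : nat -> Prop) :
  Forall (measurable M) l -> measurable M (fun x => P (mult l x)).
Proof.
  intros Hl; revert P; induction Hl as [|A l HA Hl IH]; intros P.
  - simpl. destruct (classic (P 0%nat)) as [h|h].
    + apply (measurable_ext M (fun _ => True)); [tauto|apply measurable_full].
    + apply (measurable_ext M (fun _ => False)); [tauto|apply measurable_set0].
  - apply (measurable_ext M (fun x => (A x /\ P (S (mult l x))) \/
                                     (~ A x /\ P (mult l x)))).
    + intros x; simpl. destruct (indic_spec A x) as [[h e]|[h e]]; rewrite e; tauto.
    + apply measurable_setU; apply measurable_setI.
      * exact HA.
      * exact (IH (fun c => P (S c))).
      * exact (measurable_compl _ M A HA).
      * exact (IH P).
Qed.

Lemma mu_level_sets l A B :
  Forall (measurable M) l -> measurable M A ->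
  sumR (fun m => mu M (fun x => A x /\ mult l x = m)) B
  = mu M (fun x => A x /\ (mult l x < B)%nat).
Proof.
  intros Hl HA. induction B as [|B IH]; simpl.
  - symmetry; apply mu_set0; intros x; lia.
  - rewrite IH, <- mu_setU_disjoint.
    + apply mu_ext; intros x; split.
      * intros [[h1 h2]|[h1 h2]]; split; auto; lia.
      * intros [h1 h2]; destruct (Nat.eq_dec (mult l x) B); [right|left]; split; auto; lia.
    + apply measurable_setI, (measurable_mult l (fun c => c < B)%nat); auto.
    + apply measurable_setI, (measurable_mult l (fun c => c = B)); auto.
    + intros x [_ h1] [_ h2]; lia.
Qed.

Lemma mu_list_layer_cake l B :
  Forall (measurable M) l -> (length l <= B)%nat ->
  mu_list l = sumR (fun m => mu M (fun x => (S m <= mult l x)%nat)) B.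
Proof.
  intros Hl; revert B; induction Hl as [|A l HA Hl IH]; intros B HB; simpl in *.
  - rewrite <- (sumR_const0 B). apply sumR_ext; intros m.
    symmetry; apply mu_set0; intros; lia.
  - assert (HA' : mu M A = mu M (fun x => A x /\ (mult l x < B)%nat)).
    { apply mu_ext; intros x; pose proof (mult_le_length l x).
      split; [intros; split; auto; lia|tauto]. }
    rewrite (IH B), HA', <- mu_level_sets, <- sumR_plus by (auto; lia).
    apply sumR_ext; intros m. rewrite <- mu_setU_disjoint.
    + apply mu_ext; intros x.
      destruct (indic_spec A x) as [[h e]|[h e]]; rewrite e; simpl.
      * split.
        -- intros [[_ h2]|h1]; lia.
        -- intros h1. destruct (Nat.eq_dec (mult l x) m); [left; split; auto|right; lia].
      * split; [intros [[h1 _]|h1]; [tauto|lia]|auto].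
    + apply measurable_setI, (measurable_mult l (fun c => c = m)); auto.
    + apply (measurable_mult l (fun c => S m <= c)%nat); auto.
    + intros x [_ h1] h2; lia.
Qed.

Lemma mu_list_le_of_mult_le l1 l2 :
  Forall (measurable M) l1 -> Forall (measurable M) l2 ->
  (forall x, (mult l1 x <= mult l2 x)%nat) -> mu_list l1 <= mu_list l2.
Proof.
  intros H1 H2 Hc.
  rewrite (mu_list_layer_cake l1 (length l1 + length l2)),
    (mu_list_layer_cake l2 (length l1 + length l2)) by (auto; lia).
  apply sumR_le; intros i _. apply mu_le.
  - apply (measurable_mult l1 (fun c => S i <= c)%nat); auto.
  - apply (measurable_mult l2 (fun c => S i <= c)%nat); auto.
  - intros x h; specialize (Hc x); lia.
Qed.

End LayerCake.

Fixpoint sumN (g : nat -> nat) (s n : nat) : nat :=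
  match n with 0%nat => 0%nat | S n => (g s + sumN g (S s) n)%nat end.

Lemma sumN_split g s n m : sumN g s (n + m) = (sumN g s n + sumN g (s + n) m)%nat.
Proof.
  revert s; induction n as [|n IH]; intros s; simpl; [rewrite Nat.add_0_r; auto|].
  rewrite IH. replace (S s + n)%nat with (s + S n)%nat by lia. lia.
Qed.

Lemma sumN_le_len_mono g s n m : (n <= m)%nat -> (sumN g s n <= sumN g s m)%nat.
Proof. intros H. replace m with (n + (m - n))%nat by lia. rewrite sumN_split. lia. Qed.

Lemma sumN_ext g h s n : (forall i, g i = h i) -> sumN g s n = sumN h s n.
Proof. intros H; revert s; induction n as [|n IH]; intros s; simpl; auto. Qed.

Lemma sumN_shift g j s n : sumN (fun i => g (i + j)%nat) s n = sumN g (s + j) n.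
Proof. revert s; induction n as [|n IH]; intros s; simpl; auto. Qed.

Lemma sumN_plus g h s n : sumN (fun i => g i + h i)%nat s n = (sumN g s n + sumN h s n)%nat.
Proof. revert s; induction n as [|n IH]; intros s; simpl; auto. rewrite IH. lia. Qed.

Lemma sumN_le_len g s n : (forall i, (g i <= 1)%nat) -> (sumN g s n <= n)%nat.
Proof.
  intros H; revert s; induction n as [|n IH]; intros s; simpl; auto.
  specialize (H s). specialize (IH (S s)). lia.
Qed.

Lemma sumN_ge_len g s n : (forall j, (s <= j)%nat -> (1 <= g j)%nat) -> (n <= sumN g s n)%nat.
Proof.
  revert s; induction n as [|n IH]; intros s H; simpl; auto.
  assert (1 <= g s)%nat by (apply H; lia).
  assert (n <= sumN g (S s) n)%nat by (apply IH; intros; apply H; lia). lia.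
Qed.

(* Greedy covering in time: scanning from [s], each [j] with [e j <> 0] is
   skipped together with a window [j, j + N) on which [a] has density at least
   1/3; the last window may stick out by at most [L]. *)
Lemma sumN_le_of_dense_windows (e a : nat -> nat) L :
  (forall j, (e j <= 1)%nat) ->
  (forall j, e j <> 0%nat -> exists N, (1 <= N <= L)%nat /\ (N <= 3 * sumN a j N)%nat) ->
  forall n s, (sumN e s n <= 3 * sumN a s (n + L))%nat.
Proof.
  intros He Ha n. induction n as [n IH] using (well_founded_induction Wf_nat.lt_wf).
  intros s. destruct n as [|k]; simpl; [lia|].
  destruct (Nat.eq_dec (e s) 0) as [h|h].
  { specialize (IH k ltac:(lia) (S s)). lia. }
  destruct (Ha s h) as [N [HN1 HN2]].
  destruct (Nat.le_gt_cases (S k) N) as [hk|hk].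
  - pose proof (sumN_le_len e (S s) k He).
    pose proof (sumN_le_len_mono a s N (S k + L) ltac:(lia)). simpl in *.
    pose proof (He s). lia.
  - specialize (IH (S k - N)%nat ltac:(lia) (s + N)%nat).
    change (e s + sumN e (S s) k)%nat with (sumN e s (S k)).
    change (a s + sumN a (S s) (k + L))%nat with (sumN a s (S k + L)).
    replace (S k) with (N + (S k - N))%nat by lia.
    rewrite (sumN_split e s N), <- Nat.add_assoc, (sumN_split a s N).
    pose proof (sumN_le_len e s N He). lia.
Qed.

Section MaximalInequality.
Context {X : Type} (M : FiniteMeasureSpace X) (T : X -> X).
Hypothesis HT : measure_preserving M T.

Definition iter_preimage (j : nat) (A : X -> Prop) : X -> Prop :=
  fun x => A (Nat.iter j T x).

Definition visits (A : X -> Prop) (y : X) (N : nat) : nat :=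
  sumN (fun i => indic A (Nat.iter i T y)) 0 N.

Definition heavy_segment (A : X -> Prop) (N : nat) (y : X) : Prop :=
  (1 <= N)%nat /\ (N <= 3 * visits A y N)%nat.

Definition heavy_segment_upto (A : X -> Prop) (L : nat) (y : X) : Prop :=
  exists N, (N <= L)%nat /\ heavy_segment A N y.

Lemma measure_preserving_iter j A :
  measurable M A -> measurable M (iter_preimage j A) /\ mu M (iter_preimage j A) = mu M A.
Proof.
  revert A; induction j as [|j IH]; intros A HA; [split; auto|].
  destruct (HT A HA) as [h1 h2]. destruct (IH _ h1) as [h3 h4].
  change (iter_preimage (S j) A) with (iter_preimage j (preimage T A)).
  split; auto. rewrite h4; auto.
Qed.

Lemma measurable_iter_preimages A s n :
  measurable M A -> Forall (measurable M) (map (fun j => iter_preimage j A) (seq s n)).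
Proof.
  intros HA. apply Forall_forall. intros C HC. apply in_map_iff in HC.
  destruct HC as [j [<- _]]. apply measure_preserving_iter; auto.
Qed.

Lemma mult_iter_preimages A s n x :
  mult (map (fun j => iter_preimage j A) (seq s n)) x
  = sumN (fun j => indic A (Nat.iter j T x)) s n.
Proof. revert s; induction n as [|n IH]; intros s; simpl; auto. Qed.

Lemma mu_list_iter_preimages A s n :
  measurable M A -> mu_list M (map (fun j => iter_preimage j A) (seq s n)) = INR n * mu M A.
Proof.
  intros HA; revert s; induction n as [|n IH]; intros s; simpl; [ring|].
  rewrite IH, (proj2 (measure_preserving_iter s A HA)).
  destruct n; simpl; ring.
Qed.

Lemma measurable_heavy_segment A N :
  measurable M A -> measurable M (heavy_segment A N).
Proof.
  intros HA.
  apply (measurable_ext M (fun y => (fun c => (1 <= N)%nat /\ (N <= 3 * c)%nat)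
                     (mult (map (fun j => iter_preimage j A) (seq 0 N)) y))).
  - intros y. rewrite mult_iter_preimages. reflexivity.
  - apply (measurable_mult M _ (fun c => (1 <= N)%nat /\ (N <= 3 * c)%nat)).
    apply measurable_iter_preimages; auto.
Qed.

Lemma measurable_heavy_segment_upto A L :
  measurable M A -> measurable M (heavy_segment_upto A L).
Proof.
  intros HA. apply (measurable_ext M (bigcup (fun N y => (N <= L)%nat /\ heavy_segment A N y))).
  - unfold bigcup, heavy_segment_upto; tauto.
  - apply measurable_bigcup; intros N.
    apply measurable_const_and, measurable_heavy_segment; auto.
Qed.

Lemma visits_heavy_segment_upto_le A L H x :
  (sumN (fun j => indic (heavy_segment_upto A L) (Nat.iter j T x)) 0 H
   <= 3 * sumN (fun j => indic A (Nat.iter j T x)) 0 (H + L))%nat.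
Proof.
  apply sumN_le_of_dense_windows; [intros; apply indic_le1|].
  intros j hj.
  destruct (indic_spec (heavy_segment_upto A L) (Nat.iter j T x)) as [[h _]|[_ h]];
    [|lia].
  destruct h as [N [hN [h1 h2]]]. exists N; split; [lia|].
  unfold visits in h2. rewrite <- (Nat.add_0_l j), <- sumN_shift.
  erewrite sumN_ext; [exact h2|]. intros i; simpl. rewrite Nat.iter_add. reflexivity.
Qed.

(* Integrating the pointwise bound over the first [H] iterates and using
   invariance of [mu] gives [H mu(E) <= 3 (H + L) mu(A)] for every [H]. *)
Lemma mu_heavy_segment_upto_le A L :
  measurable M A -> mu M (heavy_segment_upto A L) <= 3 * mu M A.
Proof.
  intros HA. set (E := heavy_segment_upto A L).
  assert (HE : measurable M E) by (apply measurable_heavy_segment_upto; auto).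
  apply (le_of_forall_INR_mul_le _ _ L). intros H.
  set (l := map (fun j => iter_preimage j A) (seq 0 (H + L))).
  rewrite <- (mu_list_iter_preimages E 0 H HE).
  replace (INR (H + L) * (3 * mu M A)) with (mu_list M (l ++ l ++ l))
    by (rewrite !mu_list_app; unfold l; rewrite mu_list_iter_preimages by auto; ring).
  apply mu_list_le_of_mult_le.
  - apply measurable_iter_preimages; auto.
  - unfold l; rewrite !Forall_app; repeat split; apply measurable_iter_preimages; auto.
  - intros x. rewrite !mult_app. unfold l. rewrite !mult_iter_preimages.
    pose proof (visits_heavy_segment_upto_le A L H x). unfold E. lia.
Qed.

Lemma mu_has_heavy_segment_le A :
  measurable M A ->
  measurable M (bigcup (heavy_segment A)) /\ mu M (bigcup (heavy_segment A)) <= 3 * mu M A.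
Proof.
  intros HA. split.
  - apply measurable_bigcup; intros; apply measurable_heavy_segment; auto.
  - apply mu_bigcup_le; [intros; apply measurable_heavy_segment; auto|].
    intros N. eapply Rle_trans; [|apply (mu_heavy_segment_upto_le A N HA)].
    apply mu_le; auto using measurable_partial_union, measurable_heavy_segment,
      measurable_heavy_segment_upto.
    intros x [i [hi h]]. exists i; split; auto; lia.
Qed.

End MaximalInequality.

Lemma common_returns {X : Type} (T : X -> X) (A : X -> Prop) x y :
  ~ bigcup (heavy_segment T (compl A)) x -> ~ bigcup (heavy_segment T (compl A)) y ->
  exists nk : nat -> nat,
    (forall k, (k <= nk k)%nat) /\
    (forall k, A (Nat.iter (nk k) T x) /\ A (Nat.iter (nk k) T y)).
Proof.
  intros Hx Hy.
  assert (G : forall k, exists j, (k <= j)%nat /\ A (Nat.iter j T x) /\ A (Nat.iter j T y)).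
  { intros k. apply NNPP; intros Hno.
    set (bx := fun j => indic (compl A) (Nat.iter j T x)).
    set (bY := fun j => indic (compl A) (Nat.iter j T y)).
    set (N := (3 * k + 3)%nat).
    (* Before time [N] each orbit is outside [A] fewer than [N/3] times, yet one
       of them is outside [A] at each of the [N - k > 2N/3] times in [k, N). *)
    assert (Hb : forall j, (k <= j)%nat -> (1 <= bx j + bY j)%nat).
    { intros j hj. unfold bx, bY.
      destruct (indic_spec (compl A) (Nat.iter j T x)) as [[_ e1]|[n1 e1]]; [lia|].
      destruct (indic_spec (compl A) (Nat.iter j T y)) as [[_ e2]|[n2 e2]]; [lia|].
      exfalso. apply Hno. exists j. unfold compl in n1, n2.
      split; auto; split; apply NNPP; auto. }
    pose proof (sumN_ge_len (fun j => bx j + bY j)%nat k (N - k) Hb) as Hwindow.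
    rewrite sumN_plus in Hwindow.
    pose proof (sumN_split bx 0 k (N - k)) as Sx.
    pose proof (sumN_split bY 0 k (N - k)) as Sy.
    replace (k + (N - k))%nat with N in Sx, Sy by (unfold N; lia).
    assert (Vx : ~ (N <= 3 * visits T (compl A) x N)%nat)
      by (intros h; apply Hx; exists N; split; [unfold N; lia|exact h]).
    assert (Vy : ~ (N <= 3 * visits T (compl A) y N)%nat)
      by (intros h; apply Hy; exists N; split; [unfold N; lia|exact h]).
    unfold visits in Vx, Vy. fold bx in Vx. fold bY in Vy. simpl in Sx, Sy.
    unfold N in *. lia. }
  exists (fun k => proj1_sig (constructive_indefinite_description _ (G k))).
  split; intros k; destruct (proj2_sig (constructive_indefinite_description _ (G k)));
    tauto.
Qed.

Definition eventually_light {X : Type} (T : X -> X) (K : nat -> X -> Prop) (x : X) : Prop :=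
  exists n, forall j, ~ bigcup (heavy_segment T (compl (K (S (n + j))))) x.

Lemma full_measure_eventually_light {X : Type} (M : FiniteMeasureSpace X) (T : X -> X)
  (HT : measure_preserving M T) (K : nat -> X -> Prop)
  (HK : forall n, (1 <= n)%nat -> measurable M (K n))
  (Hsum : exists l, infinite_sum (fun n => mu M (compl (K (S n)))) l) :
  full_measure M (eventually_light T K).
Proof.
  destruct Hsum as [l Hl].
  set (f := fun n => mu M (compl (K (S n)))).
  set (E := fun m => bigcup (heavy_segment T (compl (K (S m))))).
  assert (HmK : forall m, measurable M (compl (K (S m))))
    by (intros m; apply measurable_compl, HK; lia).
  assert (HE : forall m, measurable M (E m) /\ mu M (E m) <= 3 * f m)
    by (intros m; apply mu_has_heavy_segment_le; auto).
  set (V := fun n => bigcup (fun j => E (n + j)%nat)).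
  assert (HV : forall n, measurable M (V n))
    by (intros n; apply measurable_bigcup; intros j; apply HE).
  assert (HmuV : forall n, mu M (V n) <= 3 * (l - sumR f n)).
  { intros n. apply mu_bigcup_le; [intros j; apply HE|]. intros N.
    eapply Rle_trans; [apply mu_partial_union_le; intros j; apply HE|].
    eapply Rle_trans; [apply (sumR_le _ (fun j => 3 * f (n + j)%nat)); intros; apply HE|].
    rewrite sumR_scal. apply Rmult_le_compat_l; [lra|].
    apply sumR_tail_le; auto. intros i; apply mu_ge0; auto. }
  assert (Hcompl : forall x, compl (eventually_light T K) x <-> forall n, V n x).
  { intros x. unfold compl, eventually_light, V, E, bigcup. split.
    - intros h n. apply NNPP; intros h'. apply h. exists n. intros j hj. eauto.
    - intros h [n hn]. destruct (h n) as [j hj]. exact (hn j hj). }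
  assert (HZ : measurable M (compl (eventually_light T K)))
    by (apply (measurable_ext M (fun x => forall n, V n x));
        [intros x; symmetry; apply Hcompl|];
        apply measurable_bigcap; auto).
  split.
  - apply (measurable_ext M (compl (compl (eventually_light T K))));
      [unfold compl; intros; tauto|apply measurable_compl; auto].
  - assert (0 <= mu M (compl (eventually_light T K))) by (apply mu_ge0; auto).
    enough (mu M (compl (eventually_light T K)) / 3 <= 0) by lra.
    apply (le0_of_le_tails f l); auto. intros n.
    enough (mu M (compl (eventually_light T K)) <= mu M (V n)) by (specialize (HmuV n); lra).
    apply mu_le; auto. intros x hx. apply Hcompl; auto.
Qed.

Theorem mainTheorem10 (X : Type) (M : FiniteMeasureSpace X) (T : X -> X)
  (HT : measure_preserving M T) (K : nat -> X -> Prop)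
  (HK : forall n, (1 <= n)%nat -> measurable M (K n))
  (Hsum : exists l, infinite_sum (fun n => mu M (compl (K (S n)))) l) :
  exists Om : X -> Prop, full_measure M Om /\
    forall x y, Om x -> Om y ->
      exists (n : nat) (nk : nat -> nat),
        (1 <= n)%nat /\
        (forall N, exists k0, forall k, (k0 <= k)%nat -> (N <= nk k)%nat) /\
        (forall k, K n (Nat.iter (nk k) T x) /\ K n (Nat.iter (nk k) T y)).
Proof.
  exists (eventually_light T K).
  split; [exact (full_measure_eventually_light M T HT K HK Hsum)|].
  intros x y [n1 Hx] [n2 Hy].
  destruct (common_returns T (K (S (n1 + n2))) x y (Hx n2)) as [nk [Hnk Hret]].
  { rewrite Nat.add_comm; exact (Hy n1). }
  exists (S (n1 + n2)), nk. split; [lia|]. split; [|exact Hret].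
  intros N; exists N; intros k hk. specialize (Hnk k); lia.
Qed.
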